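(* For every integer $n\ge 1$ there exists an equiangular set of at least $\frac{8}{1089}\,n(4n+33)$ lines in $\mathbb{R}^n$.
   Context: A set of lines in $\mathbb{R}^n$ spanned by unit vectors $v_1,\dots,v_r$ is equiangular if there is a constant $c$ such that $|\langle v_i,v_j\rangle|=c$ for all $1\le i<j\le r$. *)

(* Stdlib reals. Vectors of R^n are functions nat -> R, of which only
   coordinates 0..n-1 are meaningful. *)
From Stdlib Require Import Reals Lra Lia.
Open Scope R_scope.

Fixpoint inner (n : nat) (x y : nat -> R) : R :=
  match n with
  | O => 0
  | S m => inner m x y + x m * y m
  end.

Definition veq (n : nat) (x y : nat -> R) : Prop :=
  forall k, (k < n)%nat -> x k = y k.

Definition equiangular_lines (n r : nat) (v : nat -> nat -> R) : Prop :=
  (forall i, (i < r)%nat -> inner n (v i) (v i) = 1) /\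
  (forall i j, (i < r)%nat -> (j < r)%nat -> i <> j ->
     ~ veq n (v i) (v j) /\ ~ veq n (v i) (fun k => - v j k)) /\
  (exists c : R, forall i j, (i < r)%nat -> (j < r)%nat -> i <> j ->
     Rabs (inner n (v i) (v j)) = c).

From Stdlib Require Import Reals Lra Lia.
From HB Require structures.
From mathcomp Require all_boot all_order all_algebra all_field Rstruct ring zify lra.
Open Scope R_scope.

(* If B_0, ..., B_(K-1) are mutually unbiased orthonormal bases of R^N
   (|<x, y>| = 1/sqrt N for x, y in different bases), then appending to each
   vector of B_b a suitable multiple of the b-th unit vector of R^K gives
   K N unit vectors of R^(N+K) with all mutual inner products of absolute
   value g/(1+g), g = 1/sqrt N: an equiangular set of K N lines.

   For N = 4^s such bases exist with K up to 2^(2s-1) + 1 (a Kerdock-type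
   construction): over F = GF(2^(2s-1)) and V = F x F_2, the functions
   chi(Q_l(v) + <w, v>) / sqrt |V|, w in V, form an orthonormal basis for each
   quadratic form Q_l, l in F, and two such bases are unbiased because
   Q_l + Q_mu is a nondegenerate quadratic form (a Gauss sum computation);
   the standard basis is one more. *)

Definition mub_system (N K : nat) (B : nat -> nat -> nat -> R) : Prop :=
  (forall b j, (b < K)%nat -> (j < N)%nat -> inner N (B b j) (B b j) = 1) /\
  (forall b j j', (b < K)%nat -> (j < N)%nat -> (j' < N)%nat -> j <> j' ->
     inner N (B b j) (B b j') = 0) /\
  (forall b b' j j', (b < K)%nat -> (b' < K)%nat -> b <> b' ->
     (j < N)%nat -> (j' < N)%nat ->
     inner N (B b j) (B b' j') * inner N (B b j) (B b' j') = / INR N).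

Module KerdockMUB.
Import HB.structures.
Import all_boot all_order all_algebra all_field Rstruct ring zify lra.
Set Implicit Arguments. Unset Strict Implicit. Unset Printing Implicit Defensive.
Import GRing.Theory Num.Theory.
Local Open Scope ring_scope.

Section Kerdock.
Variables (F : finFieldType) (h : nat).
Hypothesis charF : 2 \in [pchar F].
Hypothesis cardF : #|F| = (2 ^ h.*2.+1)%N.
Local Notation m := h.*2.+1.

Lemma frobD k (x y : F) : (x + y) ^+ (2 ^ k) = x ^+ (2 ^ k) + y ^+ (2 ^ k).
Proof. by apply: exprDn_pchar; rewrite pnatX pnatE // charF. Qed.

Lemma sqrD (x y : F) : (x + y) ^+ 2 = x ^+ 2 + y ^+ 2.
Proof. exact: (frobD 1). Qed.

Lemma frob_sum k (I : finType) (g : I -> F) :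
  (\sum_i g i) ^+ (2 ^ k) = \sum_i g i ^+ (2 ^ k).
Proof.
have frob0 : (0 : F) ^+ (2 ^ k) = 0 by rewrite expr0n expn_eq0.
exact: (big_morph _ (frobD k) frob0).
Qed.

Lemma frob_period (x : F) : x ^+ (2 ^ m) = x.
Proof. by rewrite -cardF expf_card. Qed.

Definition trace (x : F) : F := \sum_(i < m) x ^+ (2 ^ i).

Lemma traceD x y : trace (x + y) = trace x + trace y.
Proof. by rewrite /trace -big_split; apply: eq_bigr => i _; rewrite frobD. Qed.

Lemma trace0 : trace 0 = 0.
Proof. by rewrite /trace big1 // => i _; rewrite expr0n expn_eq0. Qed.

Lemma trace_sum (I : finType) (g : I -> F) :
  trace (\sum_i g i) = \sum_i trace (g i).
Proof. exact: (big_morph _ traceD trace0). Qed.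

Lemma trace_sq x : trace (x ^+ 2) = trace x.
Proof.
rewrite /trace; under eq_bigr => i _ do rewrite -exprM -expnS.
rewrite big_ord_recr /= frob_period big_ord_recl /= expr1 addrC.
by congr (_ + _); apply: eq_bigr => i _.
Qed.

Lemma trace_frob k x : trace (x ^+ (2 ^ k)) = trace x.
Proof. by elim: k => [|k IH]; rewrite ?expr1 // expnSr exprM trace_sq. Qed.

(* m is odd, so the trace of 1 is m%:R = 1. *)
Lemma trace1 : trace 1 = 1.
Proof.
rewrite /trace (eq_bigr (fun _ => 1)) => [|i _]; last by rewrite expr1n.
by rewrite sumr_const card_ord -(GRing.natr_mod_pchar charF) -addn1 -muln2 modnMDl.
Qed.

(* The prime subfield F_2 = {t | t^2 = t} = {0, 1}, where the trace and all
   the forms below take their values. *)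
Definition inF2 (t : F) : bool := t ^+ 2 == t.

Lemma inF2P t : inF2 t -> t = 0 \/ t = 1.
Proof.
move=> /eqP tt; have: t * (t - 1) = 0 by rewrite mulrBr mulr1 -expr2 tt subrr.
by move/eqP; rewrite mulf_eq0 subr_eq0 => /orP[/eqP|/eqP]; auto.
Qed.

Lemma inF2_0 : inF2 0. Proof. by rewrite /inF2 expr0n. Qed.
Lemma inF2_1 : inF2 1. Proof. by rewrite /inF2 expr1n. Qed.
Lemma inF2D a b : inF2 a -> inF2 b -> inF2 (a + b).
Proof. by rewrite /inF2 sqrD => /eqP-> /eqP->. Qed.
Lemma inF2M a b : inF2 a -> inF2 b -> inF2 (a * b).
Proof. by rewrite /inF2 exprMn => /eqP-> /eqP->. Qed.

Lemma inF2_trace x : inF2 (trace x).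
Proof.
apply/eqP; rewrite -{2}trace_sq /trace (frob_sum 1).
by apply: eq_bigr => i _; rewrite exprAC.
Qed.

Lemma traceZ t x : inF2 t -> trace (t * x) = t * trace x.
Proof. by case/inF2P => ->; rewrite ?mul0r ?trace0 ?mul1r. Qed.

Definition kform (u : F) : F := \sum_(i < h) trace (u ^+ (2 ^ i.+1).+1).

Lemma kform0 : kform 0 = 0.
Proof. by rewrite /kform big1 // => i _; rewrite expr0n /= trace0. Qed.

Lemma inF2_kform u : inF2 (kform u).
Proof.
rewrite /kform; elim/big_rec: _ => [|i x _ Hx]; first exact: inF2_0.
exact: inF2D (inF2_trace _) Hx.
Qed.

(* The cross terms of q(u + w): since Tr (w^(2^i) u) = Tr (u^(2^(m-i)) w),
   they are the terms j = 1 .. m-1 of sum_(j < m) Tr (u^(2^j) w), which is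
   Tr u * Tr w; the missing term j = 0 is Tr (u w). *)
Lemma kform_cross u w :
  \sum_(i < h) trace (u ^+ (2 ^ i.+1) * w) + \sum_(i < h) trace (w ^+ (2 ^ i.+1) * u)
  = trace u * trace w + trace (u * w).
Proof.
pose g j := trace (u ^+ (2 ^ j) * w).
have all_conj : \sum_(j < m) g j = trace u * trace w.
  by rewrite /g -trace_sum -mulr_suml (traceZ w (inF2_trace u)).
have conj_w (i : 'I_h) : trace (w ^+ (2 ^ i.+1) * u) = g (h + h - i)%N.
  rewrite /g -[RHS](trace_frob i.+1) exprMn -exprM -expnD.
  have -> : (h + h - i + i.+1 = m)%N by have := ltn_ord i; lia.
  by rewrite frob_period mulrC.
have rev_conj : \sum_(i < h) g (h + h - i)%N = \sum_(i < h) g (h + i).+1.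
  rewrite (reindex_inj rev_ord_inj) /=; apply: eq_bigr => i _; congr g.
  by have := ltn_ord i; lia.
rewrite (eq_bigr _ (fun i _ => conj_w i)) rev_conj -all_conj.
rewrite big_ord_recl -addnn big_split_ord /= /g expr1.
by rewrite [RHS]addrC addrA (addrr_pchar2 charF) add0r.
Qed.

Lemma kform_polar u w :
  kform (u + w) = kform u + kform w + (trace u * trace w + trace (u * w)).
Proof.
rewrite -kform_cross /kform -!big_split /=; apply: eq_bigr => i _.
rewrite !exprSr frobD mulrDl !mulrDr !traceD [w ^+ _ * u]mulrC; ring.
Qed.

(* The coordinate space V = F x F_2 (2^(m+1) = 4^(h+1) points), with the
   F_2 component stored as a boolean. *)
Local Notation V := (F * bool)%type.

Definition b2F (e : bool) : F := if e then 1 else 0.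
Definition vadd (v u : V) : V := (v.1 + u.1, v.2 (+) u.2).
Definition vzero : V := (0, false).

Lemma b2F_addb a b : b2F (a (+) b) = b2F a + b2F b.
Proof. by case: a; case: b; rewrite /= ?addr0 ?add0r ?(addrr_pchar2 charF). Qed.
Lemma inF2_b2F e : inF2 (b2F e).
Proof. by case: e; [exact: inF2_1 | exact: inF2_0]. Qed.

Lemma vaddK u : involutive (vadd ^~ u).
Proof.
case: u => y d [x e].
by rewrite /vadd /= -addrA (addrr_pchar2 charF) addr0 addbK.
Qed.
Lemma vaddC v u : vadd v u = vadd u v.
Proof. by rewrite /vadd addrC addbC. Qed.
Lemma vadd_inj u : injective (vadd ^~ u).
Proof. exact: inv_inj (vaddK u). Qed.
Lemma vadd_injl u : injective (vadd u).
Proof. by move=> a b; rewrite !(vaddC u); exact: vadd_inj. Qed.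

Definition vdot (w v : V) : F := trace (v.1 * w.1) + b2F v.2 * b2F w.2.

Lemma vdotDr w v u : vdot w (vadd v u) = vdot w v + vdot w u.
Proof.
case: v => x e; case: u => y d.
by rewrite /vdot /vadd /= b2F_addb mulrDl traceD; ring.
Qed.
Lemma vdotDl w w' v : vdot (vadd w w') v = vdot w v + vdot w' v.
Proof.
case: w => x e; case: w' => y d.
by rewrite /vdot /vadd /= b2F_addb mulrDr traceD; ring.
Qed.
Lemma vdot0r w : vdot w vzero = 0.
Proof. by rewrite /vdot /vzero /= mul0r trace0 mul0r addr0. Qed.
Lemma vdot0l v : vdot vzero v = 0.
Proof. by rewrite /vdot /vzero /= mulr0 trace0 mulr0 addr0. Qed.
Lemma inF2_vdot w v : inF2 (vdot w v).
Proof. by apply: inF2D; [exact: inF2_trace | apply: inF2M; exact: inF2_b2F]. Qed.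

Definition qfam (l : F) (v : V) : F := kform (l * v.1) + b2F v.2 * trace (l * v.1).
Definition qpolar (l : F) (v u : V) : F :=
  trace (l ^+ 2 * v.1 * u.1) + trace (l * v.1) * trace (l * u.1)
  + b2F v.2 * trace (l * u.1) + b2F u.2 * trace (l * v.1).

Lemma qfam_polar l v u : qfam l (vadd v u) = qfam l v + qfam l u + qpolar l v u.
Proof.
case: v => x e; case: u => y d.
rewrite /qfam /qpolar /vadd /= b2F_addb mulrDr kform_polar traceD.
have -> : l ^+ 2 * x * y = l * x * (l * y) by ring.
ring.
Qed.
Lemma qfam0 l : qfam l vzero = 0.
Proof. by rewrite /qfam /vzero /= mulr0 kform0 trace0 mul0r addr0. Qed.
Lemma inF2_qfam l v : inF2 (qfam l v).
Proof.
apply: inF2D; first exact: inF2_kform.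
by apply: inF2M; [exact: inF2_b2F | exact: inF2_trace].
Qed.

Lemma qpolarDl l v v' u : qpolar l (vadd v v') u = qpolar l v u + qpolar l v' u.
Proof.
case: v => x e; case: v' => y d; case: u => z c.
by rewrite /qpolar /vadd /= b2F_addb !mulrDr !mulrDl !traceD; ring.
Qed.
Lemma qpolar0r l v : qpolar l v vzero = 0.
Proof. by case: v => x e; rewrite /qpolar /vzero /= !mulr0 trace0; ring. Qed.
Lemma inF2_qpolar l v u : inF2 (qpolar l v u).
Proof.
by rewrite /qpolar; repeat apply: inF2D; repeat apply: inF2M;
  (exact: inF2_trace || exact: inF2_b2F).
Qed.

Lemma trace_nondeg c : (forall x, trace (x * c) = 0) -> c = 0.
Proof.
move=> Tc; apply/eqP/negPn/negP => c0.
by have /eqP := Tc c^-1; rewrite mulVf // trace1 oner_eq0.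
Qed.

(* The two kinds of test vectors used to detect the radical of the polar
   form of Q_l + Q_mu. *)
Lemma qpolar_e2 l mu y d :
  qpolar l (0, true) (y, d) + qpolar mu (0, true) (y, d)
  = trace (l * y) + trace (mu * y).
Proof. by rewrite /qpolar /= !(mulr0, mul0r, trace0, mul1r, add0r, addr0). Qed.

Lemma qpolar_F l mu x y d : trace (mu * y) = trace (l * y) ->
  qpolar l (x, false) (y, d) + qpolar mu (x, false) (y, d)
  = trace (x * ((l + mu) ^+ 2 * y + (trace (l * y) + b2F d) * (l + mu))).
Proof.
move=> Tmu; rewrite /qpolar /= !mul0r !addr0 Tmu sqrD.
set a := trace (l * y).
have -> : x * ((l ^+ 2 + mu ^+ 2) * y + (a + b2F d) * (l + mu)) =
  l ^+ 2 * x * y + mu ^+ 2 * x * y + a * (l * x) + a * (mu * x)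
  + b2F d * (l * x) + b2F d * (mu * x) by ring.
have Ta : inF2 a := inF2_trace _.
rewrite !traceD !(traceZ _ Ta) !(traceZ _ (inF2_b2F d)); ring.
Qed.

Lemma qfam_sum_nondeg l mu u : l != mu ->
  (forall v, qpolar l v u + qpolar mu v u = 0) -> u = vzero.
Proof.
case: u => y d lmu rad; set nu := l + mu.
have nu0 : nu != 0 by rewrite /nu -(oppr_pchar2 charF mu) subr_eq0.
have Tmu : trace (mu * y) = trace (l * y).
  by have := rad (0, true); rewrite qpolar_e2 => /eqP; rewrite addr_eq0 (oppr_pchar2 charF) => /eqP.
set a := trace (l * y) in Tmu *.
have nuy : nu * y = a + b2F d.
  have c0 := trace_nondeg (fun x => etrans (esym (qpolar_F x d Tmu)) (rad (x, false))).
  apply: (mulfI nu0); move/eqP: c0; rewrite addr_eq0 (oppr_pchar2 charF) => /eqP.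
  by rewrite expr2 -mulrA -/nu => ->; rewrite mulrC.
have ad : a + b2F d = 0.
  have : trace (nu * y) = 0 by rewrite /nu mulrDl traceD Tmu (addrr_pchar2 charF).
  by rewrite nuy -[a + _]mulr1 traceZ ?inF2D ?inF2_b2F ?inF2_trace // trace1 mulr1.
have y0 : y = 0 by apply/eqP; move: nuy; rewrite ad => /eqP; rewrite mulf_eq0 (negbTE nu0).
move: ad; rewrite /a y0 mulr0 trace0 add0r /vzero.
by case: (d) => // /eqP; rewrite oner_eq0.
Qed.

Definition chi (t : F) : R := if t == 0 then 1 else -1.

Lemma chi0 : chi 0 = 1. Proof. by rewrite /chi eqxx. Qed.
Lemma chi1 : chi 1 = -1. Proof. by rewrite /chi oner_eq0. Qed.
Lemma chiD a b : inF2 a -> inF2 b -> chi (a + b) = chi a * chi b.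
Proof.
case/inF2P=> ->; case/inF2P=> ->;
  rewrite ?addr0 ?add0r ?(addrr_pchar2 charF) ?chi0 ?chi1 ?mulr1 ?mul1r //.
by rewrite mulrNN mulr1.
Qed.
Lemma chi_sq t : chi t ^+ 2 = 1.
Proof. by rewrite /chi; case: eqP; rewrite ?expr1n // sqrrN expr1n. Qed.

Lemma chi_sum_additive (f : V -> F) v0 : (forall v, inF2 (f v)) ->
  (forall v, f (vadd v v0) = f v + f v0) -> f v0 = 1 -> \sum_v chi (f v) = 0.
Proof.
move=> f2 fadd fv0.
have E : \sum_v chi (f v) = - \sum_v chi (f v).
  rewrite {1}(reindex_inj (@vadd_inj v0)) /= -sumrN; apply: eq_bigr => v _.
  by rewrite fadd fv0 chiD ?inF2_1 // chi1 mulrN1.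
lra.
Qed.

Lemma gauss_sum_sq (f : V -> F) (B : V -> V -> F) :
  (forall v, inF2 (f v)) -> (forall v u, inF2 (B v u)) ->
  (forall v u, f (vadd v u) = f v + f u + B v u) ->
  (forall v v' u, B (vadd v v') u = B v u + B v' u) ->
  (forall v, B v vzero = 0) -> f vzero = 0 ->
  (forall u, u != vzero -> exists v0, B v0 u = 1) ->
  (\sum_v chi (f v)) ^+ 2 = #|{: V}|%:R.
Proof.
move=> f2 B2 fpol BD B0 f0 nondeg.
have shift v : chi (f v) * \sum_w chi (f w) = \sum_u chi (f u) * chi (B v u).
  rewrite mulr_sumr (reindex_inj (@vadd_injl v)) /=.
  apply: eq_bigr => u _; rewrite -chiD // fpol.
  by rewrite !addrA (addrr_pchar2 charF) add0r chiD.
rewrite expr2 mulr_suml (eq_bigr _ (fun v _ => shift v)) exchange_big /=.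
rewrite (bigD1 vzero) //= [X in _ + X]big1 ?addr0 => [|u u0].
  rewrite f0 chi0 (eq_bigr (fun _ => 1)) ?sumr_const // => v _.
  by rewrite B0 chi0 mulr1.
rewrite -mulr_sumr; have [v0 Bv0] := nondeg u u0.
by rewrite (chi_sum_additive (v0 := v0)) ?mulr0 // => v; rewrite BD.
Qed.

Lemma cardV : #|{: V}| = (2 ^ h.+1 * 2 ^ h.+1)%N.
Proof. by rewrite card_prod card_bool cardF -!expnD -expnSr; congr (2 ^ _)%N; lia. Qed.

(* The normalising factor 1 / sqrt |V| = 2^-(h+1). *)
Definition vscale : R := ((2 ^ h.+1)%:R)^-1.

Lemma vscale_sq : vscale ^+ 2 = (#|{: V}|%:R)^-1.
Proof. by rewrite cardV natrM invfM expr2. Qed.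

Lemma cardV_neq0 : #|{: V}|%:R != 0 :> R.
Proof. by rewrite pnatr_eq0 -lt0n; apply/card_gt0P; exists vzero. Qed.

Lemma vadd_eq0 w w' : (vadd w w' == vzero) = (w == w').
Proof.
apply/eqP/eqP => [E|<-]; last first.
  by case: w => x e; rewrite /vadd /vzero /= (addrr_pchar2 charF) addbb.
by rewrite -(vaddK w' w) E /vadd /vzero /= add0r; case: (w').
Qed.

Lemma vdot_nondeg w : w != vzero -> exists v0, vdot w v0 = 1.
Proof.
case: w => [y d] w0; have [y0|y_neq0] := eqVneq y 0.
  exists (0, true); rewrite /vdot /= mul0r trace0 add0r mul1r.
  by move: w0; rewrite y0; case: d; rewrite ?eqxx.
by exists (y^-1, false); rewrite /vdot /= mulVf // trace1 mul0r addr0.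
Qed.

Definition kvec (l : F) (w v : V) : R := vscale * chi (qfam l v + vdot w v).

Lemma inF2_qfam_vdot l w v : inF2 (qfam l v + vdot w v).
Proof. by apply: inF2D; [exact: inF2_qfam | exact: inF2_vdot]. Qed.

Lemma kvec_sq l w v : kvec l w v ^+ 2 = (#|{: V}|%:R)^-1.
Proof. by rewrite /kvec exprMn chi_sq mulr1 vscale_sq. Qed.

Lemma kvec_orthonormal l w w' :
  \sum_v kvec l w v * kvec l w' v = (w == w')%:R.
Proof.
have prod v : kvec l w v * kvec l w' v = vscale ^+ 2 * chi (vdot (vadd w w') v).
  rewrite /kvec mulrACA -chiD ?inF2_qfam_vdot // vdotDl expr2.
  by rewrite addrACA (addrr_pchar2 charF) add0r.
rewrite (eq_bigr _ (fun v _ => prod v)) -mulr_sumr.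
have [<-|ww'] := eqVneq w w'.
  have /eqP -> : vadd w w == vzero by rewrite vadd_eq0.
  rewrite (eq_bigr (fun _ => 1)) => [|v _]; last by rewrite vdot0l chi0.
  by rewrite sumr_const vscale_sq mulVf ?cardV_neq0.
have [v0 dv0] : exists v0, vdot (vadd w w') v0 = 1.
  by apply: vdot_nondeg; rewrite vadd_eq0.
rewrite (chi_sum_additive (v0 := v0)) ?mulr0 // => v; [exact: inF2_vdot | exact: vdotDr].
Qed.

(* Two different bases are unbiased: the Gauss sum of the nondegenerate
   quadratic function Q_l + Q_mu + <w + w', .> has square |V|. *)
Lemma kvec_unbiased l mu w w' : l != mu ->
  (\sum_v kvec l w v * kvec mu w' v) ^+ 2 = (#|{: V}|%:R)^-1.
Proof.
move=> lmu; pose f v := qfam l v + vdot w v + (qfam mu v + vdot w' v).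
have prod v : kvec l w v * kvec mu w' v = vscale ^+ 2 * chi (f v).
  by rewrite /kvec mulrACA -chiD ?inF2_qfam_vdot // expr2.
rewrite (eq_bigr _ (fun v _ => prod v)) -mulr_sumr exprMn.
rewrite (@gauss_sum_sq f (fun v u => qpolar l v u + qpolar mu v u)).
- by rewrite vscale_sq expr2 -mulrA mulVf ?cardV_neq0 // mulr1.
- by move=> v; apply: inF2D; exact: inF2_qfam_vdot.
- by move=> v u; apply: inF2D; exact: inF2_qpolar.
- by move=> v u; rewrite /f !qfam_polar !vdotDr; ring.
- by move=> v v' u; rewrite !qpolarDl; ring.
- by move=> v; rewrite !qpolar0r addr0.
- by rewrite /f !qfam0 !vdot0r !addr0.
move=> u u0; have [/existsP [v0 /eqP Bv0]|/existsPn noB] :=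
  boolP [exists v0, qpolar l v0 u + qpolar mu v0 u == 1]; first by exists v0.
case/eqP: u0; apply: (qfam_sum_nondeg lmu) => v.
have := noB v; case/inF2P: (inF2D (inF2_qpolar l v u) (inF2_qpolar mu v u)) => -> //.
by rewrite eqxx.
Qed.

(* The standard basis of R^V together with the |F| bases (kvec l)_l form
   |F| + 1 mutually unbiased bases; b = 0 is the standard basis and b = k+1
   the basis of the k-th element of F. *)
Definition enumF (k : nat) : F := nth 0 (enum {: F}) k.
Definition mub_vec (b : nat) (w v : V) : R :=
  if b is b'.+1 then kvec (enumF b') w v else (v == w)%:R.

Lemma sum_delta (a : V) (G : V -> R) : \sum_v (v == a)%:R * G v = G a.
Proof.
rewrite (bigD1 a) //= big1 ?addr0 ?eqxx ?mul1r // => v va.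
by rewrite (negbTE va) mul0r.
Qed.

Lemma mub_vec_orthonormal b w w' :
  \sum_v mub_vec b w v * mub_vec b w' v = (w == w')%:R.
Proof. by case: b => [|b]; rewrite /= ?kvec_orthonormal // sum_delta. Qed.

Lemma mub_vec_unbiased b b' w w' : (b < #|F|.+1)%N -> (b' < #|F|.+1)%N ->
  b != b' -> (\sum_v mub_vec b w v * mub_vec b' w' v) ^+ 2 = (#|{: V}|%:R)^-1.
Proof.
case: b => [|b]; case: b' => [|b'] //= Hb Hb' bb'.
- by rewrite sum_delta kvec_sq.
- by under eq_bigr => v _ do rewrite mulrC; rewrite sum_delta kvec_sq.
apply: kvec_unbiased; rewrite /enumF nth_uniq ?enum_uniq -?cardE //.
Qed.

Definition enumV (k : nat) : V := nth vzero (enum {: V}) k.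
Definition mub_coord (b j k : nat) : R := mub_vec b (enumV j) (enumV k).

Lemma enumV_inj j j' : (j < #|{: V}|)%N -> (j' < #|{: V}|)%N ->
  (enumV j == enumV j') = (j == j').
Proof. by move=> Hj Hj'; rewrite /enumV nth_uniq ?enum_uniq // -cardE. Qed.

Lemma sum_mub_coord b b' j j' :
  \sum_(k < #|{: V}|) mub_coord b j k * mub_coord b' j' k
  = \sum_v mub_vec b (enumV j) v * mub_vec b' (enumV j') v.
Proof.
pose G v := mub_vec b (enumV j) v * mub_vec b' (enumV j') v.
rewrite -(big_mkord xpredT (fun k => G (enumV k))) /enumV cardE.
by rewrite -(big_nth vzero (fun=> true) G) big_enum.
Qed.

End Kerdock.

Lemma inner_sum n x y : inner n x y = \sum_(k < n) x k * y k.
Proof. by elim: n => [|n IH]; rewrite ?big_ord0 // big_ord_recr /= IH. Qed.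

Lemma expn_pow a b : expn a b = Nat.pow a b.
Proof. by elim: b => [|b IH] //; rewrite expnS IH. Qed.

(* For s >= 1, R^(4^s) carries 2^(2s-1) + 1 mutually unbiased bases:
   take F = GF(2^(2s-1)) and V = F x F_2 above. *)
Lemma kerdock_mub_system s : (0 < s)%coq_nat ->
  exists B, mub_system (Nat.pow 4 s) (Nat.pow 2 (Nat.pred (s + s))).+1 B.
Proof.
move=> /ssrnat.ltP s0; set h := s.-1.
have [F charF cardF] := @pPrimePowerField 2 h.*2.+1 (isT : prime 2) (ltn0Sn _).
have cardVs : #|{: F * bool}| = Nat.pow 4 s.
  by rewrite (cardV charF cardF) -expnMn /h prednK // expn_pow.
have cardFs : #|F|.+1 = (Nat.pow 2 (Nat.pred (s + s))).+1.
  by rewrite cardF -expn_pow /h; congr (2 ^ _).+1; lia.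
exists (@mub_coord F h); rewrite /mub_system -cardVs -cardFs.
split; [|split] => [b j /ssrnat.ltP Hb /ssrnat.ltP Hj
                   | b j j' /ssrnat.ltP Hb /ssrnat.ltP Hj /ssrnat.ltP Hj' jj'
                   | b b' j j' /ssrnat.ltP Hb /ssrnat.ltP Hb' bb' /ssrnat.ltP Hj /ssrnat.ltP Hj'];
  rewrite inner_sum sum_mub_coord.
- by rewrite (mub_vec_orthonormal charF cardF) eqxx.
- by rewrite (mub_vec_orthonormal charF cardF) enumV_inj //; case: eqP.
- have neq_bb' : b != b' by apply/eqP.
  have := mub_vec_unbiased charF cardF (enumV F j) (enumV F j') Hb Hb' neq_bb'.
  by rewrite expr2 INRE.
Qed.
End KerdockMUB.

Lemma inner_ext n x x' y y' :
  (forall k, (k < n)%nat -> x k = x' k) -> (forall k, (k < n)%nat -> y k = y' k) ->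
  inner n x y = inner n x' y'.
Proof.
induction n as [|n IH]; intros Hx Hy; simpl; [reflexivity|].
rewrite IH by (intros; apply Hx || apply Hy; lia).
rewrite (Hx n), (Hy n) by lia; reflexivity.
Qed.

Lemma inner_opp_l n x y : inner n (fun k => - x k) y = - inner n x y.
Proof. induction n as [|n IH]; simpl; [ring|]. rewrite IH; ring. Qed.

Lemma inner_scale n c d x y :
  inner n (fun k => c * x k) (fun k => d * y k) = c * d * inner n x y.
Proof. induction n as [|n IH]; simpl; [ring|]. rewrite IH; ring. Qed.

Lemma inner_split a c x y :
  inner (a + c) x y = inner a x y + inner c (fun k => x (a + k)%nat) (fun k => y (a + k)%nat).
Proof.
induction c as [|c IH]; simpl.
- rewrite Nat.add_0_r; ring.
- rewrite Nat.add_succ_r; simpl; rewrite IH; ring.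
Qed.

Lemma inner_tail a n x y : (a <= n)%nat -> (forall k, (a <= k)%nat -> x k = 0) ->
  inner n x y = inner a x y.
Proof.
intros Han Hx. replace n with (a + (n - a))%nat by lia.
rewrite inner_split.
enough (inner (n - a) (fun k => x (a + k)%nat) (fun k => y (a + k)%nat) = 0) as -> by ring.
generalize (n - a)%nat as c; induction c as [|c IH]; simpl; [reflexivity|].
rewrite IH, Hx by lia; ring.
Qed.

Lemma inner_delta_l n p c y :
  inner n (fun k => if Nat.eqb k p then c else 0) y = if Nat.ltb p n then c * y p else 0.
Proof.
induction n as [|n IH]; simpl; [reflexivity|]; rewrite IH.
destruct (Nat.eqb_spec n p); destruct (Nat.ltb_spec p n); destruct (Nat.ltb_spec p (S n));
  try lia; subst; ring.
Qed.

Lemma inner_delta n p q c d : (p < n)%nat ->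
  inner n (fun k => if Nat.eqb k p then c else 0) (fun k => if Nat.eqb k q then d else 0)
  = if Nat.eqb p q then c * d else 0.
Proof.
intros Hp; rewrite inner_delta_l; destruct (Nat.ltb_spec p n); [|lia].
destruct (Nat.eqb p q); ring.
Qed.

Lemma equiangular_of_gram n r v c : c < 1 ->
  (forall i, (i < r)%nat -> inner n (v i) (v i) = 1) ->
  (forall i j, (i < r)%nat -> (j < r)%nat -> i <> j -> Rabs (inner n (v i) (v j)) = c) ->
  equiangular_lines n r v.
Proof.
intros Hc Unit Cross; split; [exact Unit|split; [|exists c; exact Cross]].
intros i j Hi Hj Hij; pose proof (Cross i j Hi Hj Hij) as C; split; intros Hv.
- rewrite (inner_ext n (v i) (v j) (v j) (v j)), Unit, Rabs_R1 in C
    by (assumption || reflexivity); lra.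
- rewrite (inner_ext n (v i) (fun k => - v j k) (v j) (v j)), inner_opp_l, Unit,
    Rabs_Ropp, Rabs_R1 in C by (assumption || reflexivity); lra.
Qed.

Lemma basis_lines n : exists v, equiangular_lines n n v.
Proof.
exists (fun i k => if Nat.eqb k i then 1 else 0).
apply (equiangular_of_gram n n _ 0); [lra| |]; intros i; [|intros j]; intros Hi;
  [|intros Hj Hij]; rewrite inner_delta by exact Hi.
- rewrite Nat.eqb_refl; ring.
- rewrite (proj2 (Nat.eqb_neq i j) Hij); apply Rabs_R0.
Qed.

(* Lifting K mutually unbiased bases of R^N to R^(N+K): the j-th vector of
   the b-th basis, i = N b + j, becomes (alpha B_b,j, beta e_b). *)
Definition mub_line (N : nat) (alpha beta : R) (B : nat -> nat -> nat -> R) (i : nat)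
  : nat -> R :=
  fun k => if Nat.ltb k N then alpha * B (i / N)%nat (i mod N)%nat k
           else if Nat.eqb k (N + i / N)%nat then beta else 0.

Lemma inner_mub_line N K n alpha beta B i i' :
  (N + K <= n)%nat -> (i / N < K)%nat -> (i' / N < K)%nat ->
  inner n (mub_line N alpha beta B i) (mub_line N alpha beta B i')
  = alpha * alpha * inner N (B (i / N)%nat (i mod N)%nat) (B (i' / N)%nat (i' mod N)%nat)
    + (if Nat.eqb (i / N) (i' / N) then beta * beta else 0).
Proof.
intros Hn Hi Hi'; unfold mub_line.
assert (Support : forall k, (N + K <= k)%nat ->
  (if Nat.ltb k N then alpha * B (i / N)%nat (i mod N)%nat k
   else if Nat.eqb k (N + i / N)%nat then beta else 0) = 0).
{ intros k Hk; destruct (Nat.ltb_spec k N); [lia|].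
  destruct (Nat.eqb_spec k (N + i / N)); [lia|reflexivity]. }
rewrite (inner_tail (N + K)), inner_split by (exact Support || lia); f_equal.
- rewrite <- inner_scale; apply inner_ext; intros k Hk;
    destruct (Nat.ltb_spec k N); (reflexivity || lia).
- rewrite <- (inner_delta K (i / N) (i' / N) beta beta) by exact Hi.
  assert (Shift : forall k p, Nat.eqb (N + k) (N + p) = Nat.eqb k p).
  { intros k p; destruct (Nat.eqb_spec (N + k) (N + p)), (Nat.eqb_spec k p);
      (reflexivity || lia). }
  apply inner_ext; intros k Hk; destruct (Nat.ltb_spec (N + k) N); try lia;
    rewrite Shift; reflexivity.
Qed.

Lemma div_mod_facts N K i : (0 < N)%nat -> (i < K * N)%nat ->
  (i / N < K)%nat /\ (i mod N < N)%nat /\ i = (N * (i / N) + i mod N)%nat.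
Proof.
intros HN Hi; split; [|split].
- apply Nat.Div0.div_lt_upper_bound; lia.
- apply Nat.mod_upper_bound; lia.
- apply Nat.div_mod; lia.
Qed.

(* K mutually unbiased bases of R^N yield K N equiangular lines in R^(N+K)
   (and hence in any R^n, n >= N + K): with g = 1/sqrt N, the lifted vectors
   (B_b,j / sqrt(1+g), sqrt(g/(1+g)) e_b) are unit vectors whose mutual inner
   products have absolute value g/(1+g), both within a basis and across. *)
Lemma mub_equiangular N K n B : (0 < N)%nat -> mub_system N K B -> (N + K <= n)%nat ->
  exists v, equiangular_lines n (K * N) v.
Proof.
intros HN [Unit [Orth Unbiased]] Hn.
assert (HNR : 0 < INR N) by (apply lt_0_INR; lia).
set (g := sqrt (/ INR N)).
assert (Hg : 0 < g) by (apply sqrt_lt_R0, Rinv_0_lt_compat; lra).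
assert (Hgg : g * g = / INR N) by (apply sqrt_sqrt; left; apply Rinv_0_lt_compat; lra).
set (alpha := sqrt (/ (1 + g))); set (beta := sqrt (g / (1 + g))).
assert (Halpha : alpha * alpha = / (1 + g))
  by (apply sqrt_sqrt; left; apply Rinv_0_lt_compat; lra).
assert (Hbeta : beta * beta = g / (1 + g))
  by (apply sqrt_sqrt; left; apply Rdiv_lt_0_compat; lra).
exists (mub_line N alpha beta B); apply (equiangular_of_gram _ _ _ (g / (1 + g))).
- apply (Rmult_lt_reg_r (1 + g)); [lra|].
  unfold Rdiv; rewrite Rmult_assoc, Rinv_l; lra.
- intros i Hi; destruct (div_mod_facts N K i HN Hi) as [Hq [Hr _]].
  rewrite (inner_mub_line N K), Unit, Nat.eqb_refl, Halpha, Hbeta by assumption.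
  field; lra.
- intros i i' Hi Hi' Hii'.
  destruct (div_mod_facts N K i HN Hi) as [Hq [Hr Hdiv]].
  destruct (div_mod_facts N K i' HN Hi') as [Hq' [Hr' Hdiv']].
  rewrite (inner_mub_line N K) by assumption.
  destruct (Nat.eqb_spec (i / N) (i' / N)) as [Same|Diff].
  + rewrite Same in Hdiv |- *.
    rewrite Orth, Rmult_0_r, Rplus_0_l, Hbeta by (assumption || lia).
    apply Rabs_right, Rle_ge, Rlt_le, Rdiv_lt_0_compat; lra.
  + set (x := inner N (B (i / N)%nat (i mod N)%nat) (B (i' / N)%nat (i' mod N)%nat)).
    assert (Hx : Rabs x = g).
    { rewrite <- (Rabs_right g) by lra; apply Rsqr_eq_abs_0; unfold Rsqr.
      rewrite Hgg; apply Unbiased; assumption. }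
    rewrite Rplus_0_r, Rabs_mult, Hx, Halpha, Rabs_right.
    * field; lra.
    * apply Rle_ge, Rlt_le, Rinv_0_lt_compat; lra.
Qed.

Lemma mub_system_le N K K' B : (K' <= K)%nat -> mub_system N K B -> mub_system N K' B.
Proof.
intros HK [Unit [Orth Unbiased]]; split; [|split]; intros; [apply Unit | apply Orth | apply Unbiased];
  (assumption || lia).
Qed.

Lemma kerdock_lines s K n : (0 < s)%nat -> (K <= S (Nat.pow 2 (Nat.pred (s + s))))%nat ->
  (Nat.pow 4 s + K <= n)%nat -> exists v, equiangular_lines n (K * Nat.pow 4 s) v.
Proof.
intros Hs HK Hn; destruct (KerdockMUB.kerdock_mub_system Hs) as [B HB].
apply (mub_equiangular _ _ _ B); [| exact (mub_system_le _ _ _ _ HK HB) | exact Hn].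
apply Nat.neq_0_lt_0, Nat.pow_nonzero; lia.
Qed.

Lemma kerdock_count s : (0 < s)%nat ->
  (2 * Nat.pow 2 (Nat.pred (s + s)) = Nat.pow 4 s)%nat.
Proof.
intros Hs; rewrite <- Nat.pow_succ_r', Nat.succ_pred_pos by lia.
replace (s + s)%nat with (2 * s)%nat by lia; rewrite Nat.pow_mul_r; reflexivity.
Qed.

Definition target (n : nat) : R := (8 / 1089) * INR n * (4 * INR n + 33).

Lemma target_small n : (n <= 25)%nat -> INR n >= target n.
Proof.
intros Hn; apply le_INR in Hn; simpl INR in Hn.
pose proof (pos_INR n); unfold target; nra.
Qed.

(* Up to dimension 66, 144 lines (s = 2, K = 9) suffice. *)
Lemma target_medium n : (n <= 66)%nat -> INR 144 >= target n.
Proof.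
intros Hn; apply le_INR in Hn; simpl INR in *.
pose proof (pos_INR n); unfold target; nra.
Qed.

Lemma find_scale n : (66 < n)%nat ->
  exists t, (66 * Nat.pow 4 t < n <= 264 * Nat.pow 4 t)%nat.
Proof.
intros Hn.
assert (Window : forall u, (n <= 264 * Nat.pow 4 u)%nat ->
  exists t, (66 * Nat.pow 4 t < n <= 264 * Nat.pow 4 t)%nat).
{ induction u as [|u IH]; intros Hu.
  - exists 0%nat; simpl in *; lia.
  - destruct (Nat.le_gt_cases n (264 * Nat.pow 4 u)) as [Le|Gt]; [now apply IH|].
    exists (S u); simpl in *; lia. }
apply (Window n); pose proof (Nat.pow_gt_lin_r 4 n); lia.
Qed.

(* In the window, K = n - 4^s <= 4^s / 2 + 1 bases give enough lines ... *)
Lemma target_partial (n N : nat) : (64 <= N)%nat -> (33 * N + 32 <= 32 * n)%nat ->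
  (2 * n <= 3 * N + 2)%nat -> INR ((n - N) * N) >= target n.
Proof.
intros H64 Hlo Hhi; apply le_INR in H64, Hlo, Hhi.
rewrite !plus_INR, !mult_INR in Hlo, Hhi; simpl INR in *.
rewrite mult_INR, minus_INR by (apply INR_le; lra); unfold target.
assert (0 <= (32 * INR n - 33 * INR N - 32) * (3 * INR N + 2 - 2 * INR n))
  by (apply Rmult_le_pos; lra).
assert (0 <= (32 * INR n - 33 * INR N - 32) * (INR N - 64)) by (apply Rmult_le_pos; lra).
nra.
Qed.

(* ... and otherwise all 4^s / 2 + 1 bases are used. *)
Lemma target_full (n N Kmax : nat) : (2 * Kmax = N + 2)%nat ->
  (8 * n <= 33 * N)%nat -> INR (Kmax * N) >= target n.
Proof.
intros HK Hn; apply (f_equal INR) in HK; apply le_INR in Hn.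
rewrite plus_INR, !mult_INR in HK; rewrite !mult_INR in Hn; simpl INR in *.
rewrite mult_INR; unfold target; pose proof (pos_INR n).
assert (0 <= (33 * INR N - 8 * INR n) * (33 * INR N + 8 * INR n))
  by (apply Rmult_le_pos; lra).
nra.
Qed.

Lemma kerdock_parameters n : (25 < n)%nat ->
  exists s K, (0 < s)%nat /\ (K <= S (Nat.pow 2 (Nat.pred (s + s))))%nat /\
    (Nat.pow 4 s + K <= n)%nat /\ INR (K * Nat.pow 4 s) >= target n.
Proof.
intros Hn; destruct (Nat.le_gt_cases n 66) as [Medium|Large].
{ exists 2%nat, 9%nat; simpl; repeat split; try lia; apply target_medium, Medium. }
destruct (find_scale n Large) as [t Window]; set (s := (t + 3)%nat).
pose proof (kerdock_count s ltac:(lia)) as Count.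
assert (HN : Nat.pow 4 s = (64 * Nat.pow 4 t)%nat)
  by (unfold s; rewrite Nat.pow_add_r; simpl; lia).
destruct (Nat.le_gt_cases (n - Nat.pow 4 s) (S (Nat.pow 2 (Nat.pred (s + s))))) as [Part|Full].
- exists s, (n - Nat.pow 4 s)%nat; repeat split; try lia.
  apply target_partial; lia.
- exists s, (S (Nat.pow 2 (Nat.pred (s + s)))); repeat split; try lia.
  apply target_full; lia.
Qed.

Theorem corollary2 (n : nat) (hn : (1 <= n)%nat) :
  exists (r : nat) (v : nat -> nat -> R),
    equiangular_lines n r v /\
    INR r >= (8 / 1089) * INR n * (4 * INR n + 33).
Proof.
destruct (Nat.le_gt_cases n 25) as [Small|Large].
- destruct (basis_lines n) as [v Hv].
  exists n, v; split; [exact Hv | exact (target_small n Small)].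
- destruct (kerdock_parameters n Large) as [s [K [Hs [HK [Hn Enough]]]]].
  destruct (kerdock_lines s K n Hs HK Hn) as [v Hv].
  exists (K * Nat.pow 4 s)%nat, v; split; [exact Hv | exact Enough].
Qed.
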